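(* Let $X$ be a finite $T_0$ topological space, $\mathcal V$ a multivector field on $X$ with $X$ invariant, and $\mathcal M=\{M_p\mid p\in\mathbb P\}$ a Morse predecomposition of $X$. If the strongly connected components of the digraph $G_{\mathcal M}$ form a partition $\mathcal Q$ of $\mathbb P$, then $\mathcal M':=\{M_Q\mid Q\in\mathcal Q\}$ is a Morse decomposition of $X$.
   Context: Notation: $\operatorname{cl}$ is closure; $A\subset X$ is locally closed if $\operatorname{cl}A\setminus A$ is closed. A multivector field $\mathcal V$ on $X$ is a partition of $X$ into locally closed sets (multivectors); $[x]_{\mathcal V}$ is the multivector containing $x$. A multivector $V$ is critical if $H(\operatorname{cl}V,\operatorname{cl}V\setminus V)$ (relative singular homology) is nontrivial, regular otherwise. $A$ is $\mathcal V$-compatible if it is a union of multivectors; $\langle A\rangle_{\mathcal V}$ is the smallest locally closed $\mathcal V$-compatible set containing $A$. $\Pi_{\mathcal V}(x)=\operatorname{cl}\{x\}\cup[x]_{\mathcal V}$. A solution is a partial map $\gamma:\mathbb Z\nrightarrow X$ with domain an integer interval and $\gamma(t+1)\in\Pi_{\mathcal V}(\gamma(t))$; a path has finite domain; a full solution has domain $\mathbb Z$. $\alpha(\gamma)=\langle\bigcap_{t\le0}\gamma((-\infty,t])\rangle_{\mathcal V}$, $\omega(\gamma)=\langle\bigcap_{t\ge0}\gamma([t,\infty))\rangle_{\mathcal V}$. A full solution is essential unless $\alpha(\gamma)$ or $\omega(\gamma)$ lies in a single regular multivector; an essential solution in $A$ has image in $A$. $\operatorname{Inv}S$ is the set of $x\in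 S$ with an essential solution $\gamma$ in $S$, $\gamma(0)=x$; $S$ is invariant if $\operatorname{Inv}S=S$. An invariant $S$ is isolated invariant if there is a closed $N\supset\Pi_{\mathcal V}(S)$ such that every path in $N$ with endpoints in $S$ has image in $S$. A link from $S_1$ to $S_2$ is a full solution $\gamma$ with $\alpha(\gamma)\cap S_1\ne\emptyset\ne\omega(\gamma)\cap S_2$; a link from $M_p$ to $M_q$ is trivial if $p=q$ and $\operatorname{im}\gamma\subset M_p$, non-trivial otherwise. A Morse predecomposition of $X$ is an indexed family $\{M_p\mid p\in\mathbb P\}$ of mutually disjoint isolated invariant subsets such that every essential solution in $X$ is a link from some $M_p$ to some $M_q$. $G_{\mathcal M}$ is the digraph with vertex set $\mathbb P$ and an edge $p\to q$ iff there is a non-trivial link from $M_p$ to $M_q$. A vertex set $A$ is strongly connected if for all $v,w\in A$ there is a walk of positive length from $v$ to $w$ inside $A$; a strongly connected component is an inclusion-maximal strongly connected set. A preorder $\le$ on $\mathbb P$ is admissible if a link from $M_p$ to $M_q$ implies $q\le p$. An invariant $T$ is saturated if every essential solution $\gamma$ in $X$ with $\alpha(\gamma)\cup\omega(\gamma)\subset T$ has $\operatorname{im}\gamma\subset T$. A Morse decomposition is a Morse predecomposition all of whose members are saturated and for which some admissible preorder is a partial order (here $\mathcal M'$ is indexed by $\mathcal Q$). $\mathbb P_C=\{p\mid M_p\cap C\ne\emptyset\}$; for $Q\subset\mathbb P$, $\operatorname{eSol}_Q(X)$ is the set of essential solutions $\gamma$ in $X$ with $\mathbb P_{\alpha(\gamma)}\cap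 Q\ne\emptyset\ne\mathbb P_{\omega(\gamma)}\cap Q$, and $M_Q=\bigcup\{\operatorname{im}\gamma\mid\gamma\in\operatorname{eSol}_Q(X)\}$. *)

From HB Require Import structures.
From mathcomp Require Import all_boot all_order all_algebra.
From mathcomp Require Import boolp.
From Stdlib Require Import Relations.
Set Implicit Arguments. Unset Strict Implicit. Unset Printing Implicit Defensive.
Import GRing.Theory Num.Theory.

(* n-simplices of the order complex: maps 'I_(n+1) -> T *)
Notation simplex T n := {ffun 'I_n.+1 -> T}.
Notation hchain T n := {ffun simplex T n -> int}.

Section Space.
Variable T : finType.
Variable opens : {set {set T}}.

Definition is_topology : Prop :=
  [/\ set0 \in opens, [set: T] \in opens,
      (forall U V, U \in opens -> V \in opens -> U :|: V \in opens) &
      (forall U V, U \in opens -> V \in opens -> U :&: V \in opens)].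

Definition T0_space : Prop :=
  forall x y : T, x != y -> exists2 U, U \in opens & (x \in U) != (y \in U).

Definition is_closed (C : {set T}) : bool := ~: C \in opens.

Definition cl (A : {set T}) : {set T} :=
  \bigcap_(U in opens | A \subset ~: U) ~: U.

Definition locally_closed (A : {set T}) : bool := is_closed (cl A :\: A).

Definition spec_lt (x y : T) : bool := (x \in cl [set y]) && (x != y).

Definition is_simplex_in n (A : {set T}) (s : simplex T n) : bool :=
  [forall i, s i \in A] &&
  [forall i : 'I_n.+1, forall j : 'I_n.+1, (i < j)%N ==> spec_lt (s i) (s j)].

Definition supported_on n (A : {set T}) (c : hchain T n) : Prop :=
  forall s, c s != 0%R -> is_simplex_in A s.

Definition face n (i : 'I_n.+2) (s : simplex T n.+1) : simplex T n :=
  [ffun j => s (lift i j)].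

Definition bd n (c : hchain T n.+1) : hchain T n :=
  [ffun t => (\sum_(s : simplex T n.+1) \sum_(i < n.+2)
               (if face i s == t then (-1) ^+ i * c s else 0))%R].

Definition rel_boundary n (A B : {set T}) (c : hchain T n) : Prop :=
  exists (d : hchain T n.+1) (e : hchain T n),
    [/\ supported_on A d, supported_on B e & forall s, c s = (bd d s + e s)%R].

(* H(A, B) <> 0 : some relative cycle is not a relative boundary *)
Definition rel_homology_nontrivial (A B : {set T}) : Prop :=
  (exists c : hchain T 0, supported_on A c /\ ~ rel_boundary A B c) \/
  (exists n (c : hchain T n.+1),
      [/\ supported_on A c, supported_on B (bd c) & ~ rel_boundary A B c]).

Variable Vf : {set {set T}}.

Definition multivector_field : Prop :=
  partition Vf [set: T] /\ forall V, V \in Vf -> locally_closed V.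

Definition critical (V : {set T}) : Prop :=
  rel_homology_nontrivial (cl V) (cl V :\: V).
Definition regular (V : {set T}) : Prop := ~ critical V.

Definition compatible (A : {set T}) : bool :=
  [exists W : {set {set T}}, (W \subset Vf) && (A == cover W)].

Definition hull (A : {set T}) : {set T} :=
  \bigcap_(B : {set T} | [&& A \subset B, locally_closed B & compatible B]) B.

Definition Pi (x : T) : {set T} := cl [set x] :|: pblock Vf x.
Definition Pi_set (S : {set T}) : {set T} := \bigcup_(x in S) Pi x.

Definition full_solution (g : int -> T) : Prop :=
  forall t : int, g (t + 1)%R \in Pi (g t).

Definition alpha_raw (g : int -> T) : {set T} :=
  [set x | `[< forall t : int, (t <= 0)%R -> exists s : int, (s <= t)%R /\ g s = x >]].
Definition omega_raw (g : int -> T) : {set T} :=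
  [set x | `[< forall t : int, (0 <= t)%R -> exists s : int, (t <= s)%R /\ g s = x >]].
Definition alpha g := hull (alpha_raw g).
Definition omega g := hull (omega_raw g).

Definition essential (g : int -> T) : Prop :=
  [/\ full_solution g,
      ~ (exists2 V, V \in Vf & regular V /\ alpha g \subset V) &
      ~ (exists2 V, V \in Vf & regular V /\ omega g \subset V)].

Definition ess_in (A : {set T}) (g : int -> T) : Prop :=
  essential g /\ forall t, g t \in A.

Definition Inv (S : {set T}) : {set T} :=
  [set x in S | `[< exists g, ess_in S g /\ g 0%R = x >]].

Definition is_invariant (S : {set T}) : Prop := Inv S = S.

Definition Pi_rel : rel T := fun x y => y \in Pi x.

(* paths = nonempty finite sequences x :: s *)
Definition isolated_invariant (S : {set T}) : Prop :=
  is_invariant S /\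
  exists N : {set T}, [/\ is_closed N, Pi_set S \subset N &
    forall x s, path Pi_rel x s -> all (mem N) (x :: s) ->
      x \in S -> last x s \in S -> all (mem S) (x :: s)].

Definition link (S1 S2 : {set T}) (g : int -> T) : Prop :=
  [/\ full_solution g, alpha g :&: S1 != set0 & omega g :&: S2 != set0].

Section Family.
Variable I : Type.
Variable M : I -> {set T}.

Definition morse_predecomposition : Prop :=
  [/\ forall p q, p <> q -> M p :&: M q = set0,
      forall p, isolated_invariant (M p) &
      forall g, ess_in [set: T] g -> exists p q, link (M p) (M q) g].

Definition nontrivial_link (p q : I) (g : int -> T) : Prop :=
  link (M p) (M q) g /\ ~ (p = q /\ forall t, g t \in M p).

Definition edge (p q : I) : Prop := exists g, nontrivial_link p q g.

Definition admissible (R : I -> I -> Prop) : Prop :=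
  forall p q g, link (M p) (M q) g -> R q p.

Definition saturated (S : {set T}) : Prop :=
  is_invariant S /\
  forall g, ess_in [set: T] g -> alpha g :|: omega g \subset S ->
    forall t, g t \in S.

Definition morse_decomposition : Prop :=
  [/\ morse_predecomposition,
      forall p, saturated (M p) &
      exists R : I -> I -> Prop,
        [/\ reflexive _ R, transitive _ R, antisymmetric _ R & admissible R]].
End Family.

Section Graph.
Variable P : finType.
Variable M : P -> {set T}.

Definition strongly_connected (A : {set P}) : Prop :=
  forall v w, v \in A -> w \in A ->
    clos_trans P (fun a b => [/\ a \in A, b \in A & edge M a b]) v w.

Definition scc (A : {set P}) : Prop :=
  strongly_connected A /\
  forall B, strongly_connected B -> A \subset B -> B = A.

Definition M_of (Q : {set P}) : {set T} :=
  [set x | `[< exists g, [/\ ess_in [set: T] g,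
      (exists2 p, p \in Q & M p :&: alpha g != set0),
      (exists2 q, q \in Q & M q :&: omega g != set0) &
      exists t, g t = x] >]].
End Graph.

End Space.

From mathcomp Require Import all_boot all_order all_algebra.
From mathcomp Require Import boolp.
From mathcomp Require Import zify.
From Stdlib Require Import Relations.
Set Implicit Arguments. Unset Strict Implicit. Unset Printing Implicit Defensive.
Import Order.TTheory GRing.Theory Num.Theory.

(** The set [M_Q] is exactly the set of points lying on a [Pi]-path from
    [\bigcup_(p in Q) M p] back to it: a solution runs from its alpha-limit
    to its omega-limit (the hull of a limit set only adds points on such
    paths), and conversely a path between two invariant sets, extended at
    both ends by essential solutions inside them, becomes an essential
    solution whose limit sets meet those invariant sets.  A path from [M p]
    to [M q] therefore yields a walk from [p] to [q] in [G_M], so the sets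
    [M_Q] of distinct strongly connected components are disjoint; being
    path-convex they are invariant, isolated (with [N = X]) and saturated.
    Reachability between components is an admissible partial order, its
    antisymmetry being the maximality of strongly connected components. *)

Lemma connect_last (T : finType) (e : rel T) x p u :
  path e x p -> u \in x :: p -> connect e u (last x p).
Proof.
move=> xp up; case: {up}(splitPl up) xp => p1 p2 <-.
rewrite cat_path => /andP[_ p2path].
by apply/connectP; exists p2; rewrite ?last_cat.
Qed.

Lemma clos_trans_mono (A : Type) (R S : relation A) :
  inclusion A R S -> inclusion A (clos_trans A R) (clos_trans A S).
Proof.
move=> RS x y; elim=> [u v /RS|u v w _ IHuv _ IHvw]; first exact: t_step.
exact: t_trans IHuv IHvw.
Qed.

Lemma clos_t_rt_t (A : Type) (R : relation A) x y z :
  clos_trans A R x y -> clos_refl_trans A R y z -> clos_trans A R x z.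
Proof.
move=> xy yz; elim: {yz}(clos_rt_rtn1 _ _ _ _ yz) => // u v e _ IH.
exact: t_trans IH (t_step _ _ _ _ e).
Qed.

Section FiniteTopology.
Variables (T : finType) (opens : {set {set T}}).
Hypothesis htop : is_topology opens.

Definition min_nbhd (x : T) : {set T} := \bigcap_(U in opens | x \in U) U.

Lemma min_nbhd_open x : min_nbhd x \in opens.
Proof.
case: htop => _ opT _ opI.
by apply: (big_ind (fun U => U \in opens)) => // U /andP[].
Qed.

Lemma mem_min_nbhd x : x \in min_nbhd x.
Proof. by apply/bigcapP => U /andP[]. Qed.

Lemma min_nbhd_sub U x : U \in opens -> x \in U -> min_nbhd x \subset U.
Proof. by move=> Uo xU; apply: bigcap_inf; rewrite Uo xU. Qed.

Lemma subset_cl (A : {set T}) : A \subset cl opens A.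
Proof. by apply/subsetP => x xA; apply/bigcapP => U /andP[_ /subsetP]; apply. Qed.

Lemma cl_closed (A : {set T}) : is_closed opens (cl opens A).
Proof.
case: htop => op0 _ opU _.
rewrite /is_closed /cl setC_bigcap.
by apply: (big_ind (fun U => U \in opens)) => // U /andP[Uo _]; rewrite setCK.
Qed.

Lemma cl_sub_closed C : cl opens C \subset C -> is_closed opens C.
Proof.
move=> clC; have clCE : cl opens C = C by apply/eqP; rewrite eqEsubset clC subset_cl.
by rewrite -clCE; apply: cl_closed.
Qed.

Lemma cl_min_nbhdP x (A : {set T}) :
  reflect (exists2 y, y \in A & y \in min_nbhd x) (x \in cl opens A).
Proof.
apply: (iffP idP) => [xA|[y yA yx]].
  apply: contrapT => noy.
  have sub : A \subset ~: min_nbhd x.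
    by apply/subsetP => y yA; rewrite inE; apply/negP => yx; apply: noy; exists y.
  have := bigcapP xA (min_nbhd x).
  by rewrite min_nbhd_open sub inE mem_min_nbhd => /(_ isT).
apply/bigcapP => U /andP[Uo /subsetP AU]; rewrite inE; apply: contraL (AU y yA).
by rewrite inE negbK => /(min_nbhd_sub Uo)/subsetP; apply.
Qed.

Lemma cl_set1E x y : (x \in cl opens [set y]) = (y \in min_nbhd x).
Proof.
apply/idP/idP => [/cl_min_nbhdP[z /set1P -> //]|yx].
by apply/cl_min_nbhdP; exists y; rewrite ?set11.
Qed.

Lemma cl_set1P x (A : {set T}) :
  reflect (exists2 y, y \in A & x \in cl opens [set y]) (x \in cl opens A).
Proof.
by apply: (iffP (cl_min_nbhdP x A)) => -[y yA yx]; exists y => //; move: yx; rewrite cl_set1E.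
Qed.

Lemma cl_set1_trans x y z :
  x \in cl opens [set y] -> y \in cl opens [set z] -> x \in cl opens [set z].
Proof.
rewrite !cl_set1E => yx; apply/subsetP.
exact: min_nbhd_sub (min_nbhd_open x) yx.
Qed.

End FiniteTopology.

Local Open Scope ring_scope.

Section Limits.
Variable T : finType.
Implicit Types (g : int -> T) (S : {set T}).

Lemma omega_raw_from g c x :
  x \in omega_raw g <-> forall t, c <= t -> exists s, t <= s /\ g s = x.
Proof.
rewrite inE; split => [/asboolP h t ct | h]; last apply/asboolP => t t0.
  have /h[s [ts gs]] : 0 <= Num.max t 0 by lia.
  by exists s; split=> //; lia.
have /h[s [ts gs]] : c <= Num.max t c by lia.
by exists s; split=> //; lia.
Qed.

Lemma alpha_raw_rev g : alpha_raw g = omega_raw (fun t => g (- t)).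
Proof.
apply/setP => x; rewrite !inE; congr `[< _ >]; apply/propext.
split=> h t ht.
  have /h[s [st <-]] : - t <= 0 by lia.
  by exists (- s); split; [lia | rewrite opprK].
have /h[s [st <-]] : 0 <= - t by lia.
by exists (- s); split; first lia.
Qed.

Lemma omega_raw_tail g g' c :
  (forall t, c <= t -> g t = g' t) -> omega_raw g = omega_raw g'.
Proof.
move=> gg'; apply/setP => x.
apply/idP/idP => /(omega_raw_from _ c) h; apply/(omega_raw_from _ c) => t ct;
  have [s [ts <-]] := h t ct; exists s; split=> //; rewrite gg' //; lia.
Qed.

Lemma alpha_raw_tail g g' c :
  (forall t, t <= c -> g t = g' t) -> alpha_raw g = alpha_raw g'.
Proof.
move=> gg'; rewrite !alpha_raw_rev; apply: (omega_raw_tail (c := - c)) => t ct.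
by apply: gg'; lia.
Qed.

Lemma omega_raw_shift g d : omega_raw (fun t => g (t + d)) = omega_raw g.
Proof.
apply/setP => x; apply/idP/idP => [|/(omega_raw_from _ d) h].
  move=> /(omega_raw_from _ 0) h; apply/(omega_raw_from _ d) => t dt.
  have /h[s [ts <-]] : 0 <= t - d by lia.
  by exists (s + d); split=> //; lia.
apply/(omega_raw_from _ 0) => t t0.
have /h[s [ts <-]] : d <= t + d by lia.
by exists (s - d); split; [lia | rewrite subrK].
Qed.

Lemma alpha_raw_shift g d : alpha_raw (fun t => g (t + d)) = alpha_raw g.
Proof.
rewrite !alpha_raw_rev -(omega_raw_shift (fun t => g (- t)) (- d)).
by congr omega_raw; apply: funext => t; rewrite opprD opprK.
Qed.

(* If every value were eventually left for good, [g] would take no value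
   after the sum of all the leaving times. *)
Lemma omega_raw_neq0 g : omega_raw g != set0.
Proof.
apply/set0Pn; apply: contrapT => /forallNP none.
have /choice[leave leaveP] : forall x, exists t, 0 <= t /\ forall s, t <= s -> g s != x.
  move=> x; apply: contrapT => /forallNP stays; apply: (none x).
  apply/(omega_raw_from _ 0) => t t0; apply: contrapT => /forallNP never.
  by apply: (stays t); split=> // s ts; apply/eqP => gs; apply: (never s).
pose t := \sum_(x : T) leave x.
have leave_le x : leave x <= t.
  rewrite /t (bigD1 x) //= lerDl sumr_ge0 // => y _.
  by case: (leaveP y).
by have /eqP[] := (leaveP (g t)).2 t (leave_le (g t)).
Qed.

Lemma alpha_raw_neq0 g : alpha_raw g != set0.
Proof. by rewrite alpha_raw_rev omega_raw_neq0. Qed.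

Lemma omega_raw_sub g S : (forall t, g t \in S) -> omega_raw g \subset S.
Proof.
move=> gS; apply/subsetP => x /(omega_raw_from _ 0) h.
by have [s [_ <-]] := h 0 (lexx 0).
Qed.

Lemma alpha_raw_sub g S : (forall t, g t \in S) -> alpha_raw g \subset S.
Proof. by move=> gS; rewrite alpha_raw_rev; apply: omega_raw_sub. Qed.

Definition prepend (x : T) g : int -> T := fun t => if t <= 0 then x else g (t - 1).

Definition splice g1 g2 : int -> T := fun t => if t < 0 then g1 t else g2 t.

Lemma prepend_npos x g t : t <= 0 -> prepend x g t = x.
Proof. by rewrite /prepend => ->. Qed.

Lemma prepend_pos x g t : 0 < t -> prepend x g t = g (t - 1).
Proof. by rewrite /prepend => /lt_geF ->. Qed.

Lemma splice_neg g1 g2 t : t < 0 -> splice g1 g2 t = g1 t.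
Proof. by rewrite /splice => ->. Qed.

Lemma splice_nneg g1 g2 t : 0 <= t -> splice g1 g2 t = g2 t.
Proof. by rewrite /splice => /le_gtF ->. Qed.

Lemma omega_raw_prepend x g : omega_raw (prepend x g) = omega_raw g.
Proof.
rewrite -(omega_raw_shift _ 1); apply: (omega_raw_tail (c := 0)) => t t0.
by rewrite prepend_pos ?addrK //; lia.
Qed.

Lemma alpha_raw_splice g1 g2 : alpha_raw (splice g1 g2) = alpha_raw g1.
Proof. by apply: (alpha_raw_tail (c := -1)) => t t1; rewrite splice_neg //; lia. Qed.

Lemma omega_raw_splice g1 g2 : omega_raw (splice g1 g2) = omega_raw g2.
Proof. by apply: (omega_raw_tail (c := 0)) => t t0; rewrite splice_nneg. Qed.

End Limits.

Section Flow.
Variables (T : finType) (opens Vf : {set {set T}}).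
Hypotheses (htop : is_topology opens) (hVf : multivector_field opens Vf).
Implicit Types (g : int -> T) (S : {set T}).

Local Notation "x ~> y" := (connect (Pi_rel opens Vf) x y) (at level 70).
Local Notation full := (full_solution opens Vf).

Lemma Pi_rel_cl x y : y \in cl opens [set x] -> Pi_rel opens Vf x y.
Proof. by rewrite /Pi_rel /Pi inE => ->. Qed.

Lemma Pi_rel_pblock x y : y \in pblock Vf x -> Pi_rel opens Vf x y.
Proof. by rewrite /Pi_rel /Pi inE => ->; rewrite orbT. Qed.

Lemma Pi_rel_refl x : Pi_rel opens Vf x x.
Proof. by apply: Pi_rel_cl; rewrite (subsetP (subset_cl _ _)) ?set11. Qed.

Definition between S : {set T} :=
  [set y | [exists s in S, s ~> y] && [exists s in S, y ~> s]].

Lemma betweenP S y :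
  reflect ((exists2 s, s \in S & s ~> y) /\ (exists2 s, s \in S & y ~> s))
          (y \in between S).
Proof.
by rewrite inE; apply: (iffP andP) => -[? ?]; split; apply/exists_inP.
Qed.

Lemma subset_between S : S \subset between S.
Proof. by apply/subsetP => s sS; apply/betweenP; split; exists s. Qed.

Lemma between_convex S x y z :
  x \in between S -> z \in between S -> x ~> y -> y ~> z -> y \in between S.
Proof.
move=> /betweenP[[s sS sx] _] /betweenP[_ [s' s'S zs']] xy yz.
apply/betweenP; split; [exists s | exists s'] => //.
  exact: connect_trans sx xy.
exact: connect_trans yz zs'.
Qed.

Lemma between_locally_closed S : locally_closed opens (between S).
Proof.
set D := between S; apply: (cl_sub_closed htop); apply/subsetP => z.
move=> /(cl_set1P htop)[e /setDP[/(cl_set1P htop)[d dD ed] eD] ze].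
have zclD : z \in cl opens D.
  by apply/(cl_set1P htop); exists d; last exact: cl_set1_trans ze ed.
rewrite inE zclD andbT; apply: contra eD => zD.
apply: (between_convex dD zD); apply: connect1; exact: Pi_rel_cl.
Qed.

Lemma between_compatible S : compatible Vf (between S).
Proof.
case: hVf => /and3P[/eqP covVf trivVf _] _.
have inpb y : y \in pblock Vf y by rewrite mem_pblock covVf inE.
have pblock_between y z : y \in between S -> z \in pblock Vf y -> z \in between S.
  move=> yD zy; apply: (between_convex yD yD); apply: connect1; apply: Pi_rel_pblock => //.
  by rewrite (same_pblock trivVf zy).
apply/existsP; exists [set V in Vf | V \subset between S].
apply/andP; split; first by apply/subsetP => V; rewrite inE => /andP[].
apply/eqP/setP => y; apply/idP/bigcupP => [yD|[V]].
  exists (pblock Vf y) => //; rewrite inE pblock_mem ?covVf ?inE //.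
  by apply/subsetP => z; apply: pblock_between.
by rewrite inE => /andP[_ /subsetP]; apply.
Qed.

Lemma subset_hull S : S \subset hull opens Vf S.
Proof. by apply/subsetP => x xS; apply/bigcapP => B /and3P[/subsetP SB _ _]; apply: SB. Qed.

Lemma hull_sub_between S : hull opens Vf S \subset between S.
Proof.
by apply: bigcap_inf; rewrite subset_between between_locally_closed between_compatible.
Qed.

Lemma connect_le g s t : full g -> s <= t -> g s ~> g t.
Proof.
move=> gfull st; have -> : t = s + (absz (t - s))%:Z by lia.
elim: (absz (t - s)) => [|n IH]; first by rewrite addr0.
apply: connect_trans IH (connect1 _).
have -> : s + n.+1%:Z = s + n%:Z + 1 by lia.
exact: gfull.
Qed.

Lemma alpha_connect g y t : full g -> y \in alpha opens Vf g -> y ~> g t.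
Proof.
move=> gfull /(subsetP (hull_sub_between _))/betweenP[_ [x xa yx]].
move: xa; rewrite alpha_raw_rev => /(omega_raw_from _ (- t))/(_ (- t) (lexx _)).
move=> [s [ts gsx]]; rewrite -gsx in yx.
by apply: connect_trans yx (connect_le gfull _); lia.
Qed.

Lemma omega_connect g z t : full g -> z \in omega opens Vf g -> g t ~> z.
Proof.
move=> gfull /(subsetP (hull_sub_between _))/betweenP[[x xo xz] _].
have [s [ts gsx]] := (omega_raw_from _ t _).1 xo t (lexx _).
by rewrite -gsx in xz; apply: connect_trans (connect_le gfull ts) xz.
Qed.

Lemma full_prepend x g : full g -> Pi_rel opens Vf x (g 0) -> full (prepend x g).
Proof.
move=> gfull xg0 t; case: (ltrgtP t 0) => [tneg|tpos|->].
- rewrite !prepend_npos; try lia.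
  exact: Pi_rel_refl.
- rewrite !prepend_pos ?addrK; try lia.
  by have := gfull (t - 1); rewrite subrK.
- by rewrite add0r prepend_pos // subrr prepend_npos.
Qed.

Lemma full_splice g1 g2 : full g1 -> full g2 -> g1 0 = g2 0 -> full (splice g1 g2).
Proof.
move=> g1full g2full g12 t; case: (ltrP t (-1)) => [tlt|tge].
  rewrite !splice_neg; try lia; exact: g1full.
case: (ltrP t 0) => [tneg|tnneg].
  have -> : t = -1 by lia.
  rewrite addNr splice_nneg // splice_neg // -g12; exact: g1full.
rewrite !splice_nneg; try lia; exact: g2full.
Qed.

Lemma full_shift g d : full g -> full (fun t => g (t + d)).
Proof. by move=> gfull t /=; rewrite addrAC; apply: gfull. Qed.

Lemma essential_shift g d : essential opens Vf g -> essential opens Vf (fun t => g (t + d)).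
Proof.
by case=> gfull ga go; split; rewrite /alpha /omega ?alpha_raw_shift ?omega_raw_shift //;
  apply: full_shift.
Qed.

Lemma connect_solution x g : full g -> x ~> g 0 ->
  exists g', [/\ full g', g' 0 = x, omega_raw g' = omega_raw g &
                 exists2 d, 0 <= d & g' d = g 0].
Proof.
move=> gfull /connectP[p]; elim: p x => [|y p IH] x /=.
  by move=> _ g0x; exists g; split=> //; exists 0.
move=> /andP[xy yp] g0; have [g' [g'full g'0 g'o [d d0 g'd]]] := IH y yp g0.
exists (prepend x g'); split.
- by apply: full_prepend; rewrite // g'0.
- by rewrite prepend_npos.
- by rewrite omega_raw_prepend.
- by exists (d + 1); rewrite ?prepend_pos ?addrK //; lia.
Qed.

Lemma invariant_solution S w : is_invariant opens Vf S -> w \in S ->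
  exists2 g, ess_in opens Vf S g & g 0 = w.
Proof. by move=> Sinv; rewrite -{1}Sinv inE => /andP[_ /asboolP[g []]]; exists g. Qed.

Lemma alpha_meets S g : (forall t, g t \in S) -> S :&: alpha opens Vf g != set0.
Proof.
move=> gS; have /set0Pn[x xa] := alpha_raw_neq0 g.
by apply/set0Pn; exists x; rewrite inE (subsetP (alpha_raw_sub gS)) ?(subsetP (subset_hull _)).
Qed.

Lemma omega_meets S g : (forall t, g t \in S) -> S :&: omega opens Vf g != set0.
Proof.
move=> gS; have /set0Pn[x xo] := omega_raw_neq0 g.
by apply/set0Pn; exists x; rewrite inE (subsetP (omega_raw_sub gS)) ?(subsetP (subset_hull _)).
Qed.

(* The past of a solution through [w] in [Sp], then the path [w ~> x ~> w'],
   then the future of a solution through [w'] in [Sq]. *)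
Lemma connecting_solution Sp Sq w w' x :
  is_invariant opens Vf Sp -> is_invariant opens Vf Sq ->
  w \in Sp -> w' \in Sq -> w ~> x -> x ~> w' ->
  exists h, [/\ essential opens Vf h, Sp :&: alpha opens Vf h != set0,
               Sq :&: omega opens Vf h != set0 & exists t, h t = x].
Proof.
move=> Spinv Sqinv wSp w'Sq wx xw'.
have [g1 [[g1full g1a _] g1S] g10] := invariant_solution Spinv wSp.
have [g2 [[g2full _ g2o] g2S] g20] := invariant_solution Sqinv w'Sq.
have [g2' [g2'full g2'0 g2'o _]] : exists g2', [/\ full g2', g2' 0 = x,
    omega_raw g2' = omega_raw g2 & exists2 d, 0 <= d & g2' d = g2 0].
  by apply: connect_solution; rewrite ?g20.
have [g3 [g3full g30 g3o [d d0 g3d]]] : exists g3, [/\ full g3, g3 0 = w,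
    omega_raw g3 = omega_raw g2' & exists2 d, 0 <= d & g3 d = g2' 0].
  by apply: connect_solution; rewrite ?g2'0.
have ha : alpha opens Vf (splice g1 g3) = alpha opens Vf g1.
  by rewrite /alpha alpha_raw_splice.
have ho : omega opens Vf (splice g1 g3) = omega opens Vf g2.
  by rewrite /omega omega_raw_splice g3o g2'o.
exists (splice g1 g3); split.
- by split; rewrite ?ha ?ho //; apply: full_splice; rewrite ?g10 ?g30.
- by rewrite ha; apply: alpha_meets.
- by rewrite ho; apply: omega_meets.
- by exists d; rewrite splice_nneg // g3d g2'0.
Qed.

Section Predecomposition.
Variables (P : finType) (M : P -> {set T}).
Hypothesis hpre : morse_predecomposition opens Vf M.
Implicit Types (A B : {set P}).

Definition edge_reach : relation P := clos_refl_trans P (edge opens Vf M).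

Lemma morse_set_invariant p : is_invariant opens Vf (M p).
Proof. by case: hpre => _ /(_ p)[]. Qed.

Lemma edge_reach_connect p q w w' : w \in M p -> w' \in M q -> w ~> w' -> edge_reach p q.
Proof.
move=> wp w'q ww'; have [->|pq] := eqVneq p q; first exact: rt_refl.
have [h [[hfull _ _] ha ho _]] := connecting_solution
  (morse_set_invariant p) (morse_set_invariant q) wp w'q ww' (connect0 _ _).
apply: rt_step; exists h; split; first by split; rewrite // setIC.
by case=> epq; rewrite epq eqxx in pq.
Qed.

Lemma M_of_between A : M_of opens Vf M A = between (\bigcup_(p in A) M p).
Proof.
apply/setP => x; apply/idP/idP.
  rewrite inE => /asboolP[g [[[gfull _ _] _] [p pA pa] [q qA qo] [t <-]]].
  case/set0Pn: pa => w /setIP[wp wa]; case/set0Pn: qo => w' /setIP[w'q w'o].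
  apply/betweenP; split.
    by exists w; [apply/bigcupP; exists p | apply: alpha_connect].
  by exists w'; [apply/bigcupP; exists q | apply: omega_connect].
move=> /betweenP[[w /bigcupP[p pA wp] wx] [w' /bigcupP[q qA w'q] xw']].
have [h [hess ha ho [t ht]]] := connecting_solution
  (morse_set_invariant p) (morse_set_invariant q) wp w'q wx xw'.
rewrite inE; apply/asboolP; exists h.
by split; [split=> // s; rewrite inE | exists p | exists q | exists t].
Qed.

Lemma subset_M_of A p : p \in A -> M p \subset M_of opens Vf M A.
Proof.
move=> pA; rewrite M_of_between; apply: subset_trans (subset_between _).
exact: bigcup_sup.
Qed.

Lemma M_of_connect A B x y : x \in M_of opens Vf M A -> y \in M_of opens Vf M B ->
  x ~> y -> exists2 p, p \in A & exists2 q, q \in B & edge_reach p q.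
Proof.
rewrite !M_of_between => /betweenP[[w /bigcupP[p pA wp] wx] _].
move=> /betweenP[_ [w' /bigcupP[q qB w'q] yw']] xy.
exists p => //; exists q => //; apply: edge_reach_connect wp w'q _.
exact: connect_trans wx (connect_trans xy yw').
Qed.

Lemma link_M_of A B p q g : p \in A -> q \in B -> link opens Vf (M p) (M q) g ->
  link opens Vf (M_of opens Vf M A) (M_of opens Vf M B) g.
Proof.
move=> pA qB [gfull ga go]; split=> //.
  case/set0Pn: ga => y /setIP[ya yp]; apply/set0Pn; exists y.
  by rewrite inE ya (subsetP (subset_M_of pA)).
case/set0Pn: go => y /setIP[yo yq]; apply/set0Pn; exists y.
by rewrite inE yo (subsetP (subset_M_of qB)).
Qed.

Lemma M_of_invariant A : is_invariant opens Vf (M_of opens Vf M A).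
Proof.
apply/setP => x; rewrite inE; apply/andb_idr; rewrite inE.
move=> /asboolP[g [[gess _] ga go [t <-]]]; apply/asboolP.
pose g' s := g (s + t).
have g'ess : ess_in opens Vf [set: T] g'.
  by split=> [|s]; rewrite ?inE //; apply: essential_shift.
have [g'a g'o] : alpha opens Vf g' = alpha opens Vf g /\ omega opens Vf g' = omega opens Vf g.
  by rewrite /alpha /omega alpha_raw_shift omega_raw_shift.
exists g'; split; last by rewrite /g' add0r.
split=> [|s]; first by case: g'ess.
rewrite inE; apply/asboolP; exists g'.
by split; rewrite ?g'a ?g'o //; exists s.
Qed.

Lemma M_of_isolated_invariant A : isolated_invariant opens Vf (M_of opens Vf M A).
Proof.
split; first exact: M_of_invariant.
exists [set: T]; split=> [| |x s xs _]; first by rewrite /is_closed setCT; case: htop.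
  exact: subsetT.
rewrite M_of_between => xA lastA; apply/allP => u us.
apply: (between_convex xA lastA); first exact: path_connect xs u us.
exact: connect_last xs us.
Qed.

Lemma M_of_saturated A : saturated opens Vf (M_of opens Vf M A).
Proof.
split=> [|g [[gfull _ _] _] sub t]; first exact: M_of_invariant.
have /set0Pn[y ya] := alpha_raw_neq0 g; have /set0Pn[z zo] := omega_raw_neq0 g.
have {}ya : y \in alpha opens Vf g by apply: (subsetP (subset_hull _)).
have {}zo : z \in omega opens Vf g by apply: (subsetP (subset_hull _)).
have yA : y \in M_of opens Vf M A by apply: (subsetP sub); rewrite inE ya.
have zA : z \in M_of opens Vf M A by apply: (subsetP sub); rewrite inE zo orbT.
move: yA zA; rewrite M_of_between => yA zA.
by apply: (between_convex yA zA); [apply: alpha_connect ya | apply: omega_connect zo].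
Qed.

Lemma scc_edge_reach A a b : scc opens Vf M A -> a \in A -> b \in A -> edge_reach a b.
Proof.
case=> Asc _ aA bA; apply: clos_t_clos_rt.
by apply: clos_trans_mono (Asc a b aA bA) => u v [_ _].
Qed.

(* The points reachable from [a] and back form a strongly connected set
   containing the component of [a]; maximality forces equality. *)
Lemma scc_closed A a b : scc opens Vf M A -> a \in A ->
  edge_reach a b -> edge_reach b a -> b \in A.
Proof.
move=> Ascc aA ab ba; have [Asc Amax] := Ascc.
pose C := [set v | `[< edge_reach a v /\ edge_reach v a >]].
have CP v : v \in C <-> edge_reach a v /\ edge_reach v a by rewrite inE; split=> /asboolP.
pose EC u v := [/\ u \in C, v \in C & edge opens Vf M u v].
have reach_in u v : edge_reach u v -> u \in C -> v \in C -> clos_refl_trans P EC u v.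
  move=> uv; elim: {uv}(clos_rt_rt1n _ _ _ _ uv) => [x|x x' y e x'y IH] xC yC.
    exact: rt_refl.
  have x'C : x' \in C.
    case/CP: xC => ax _; case/CP: yC => _ ya; apply/CP; split.
      exact: rt_trans ax (rt_step _ _ _ _ e).
    exact: rt_trans (clos_rt1n_rt _ _ _ _ x'y) ya.
  by apply: (rt_trans _ _ _ x'); [apply: rt_step | apply: IH].
have AC : A \subset C.
  by apply/subsetP => v vA; apply/CP; split; apply: (scc_edge_reach Ascc).
have aC : a \in C by apply: (subsetP AC).
have loop : clos_trans P EC a a.
  by apply: clos_trans_mono (Asc a a aA aA) => u v [uA vA e]; split=> //; apply: (subsetP AC).
have Csc : strongly_connected opens Vf M C.
  move=> v w vC wC; apply: (clos_rt_t _ _ _ a); first by apply: reach_in => //; case/CP: vC.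
  by apply: clos_t_rt_t loop _; apply: reach_in => //; case/CP: wC.
by rewrite -(Amax C Csc AC); apply/CP.
Qed.

Section Components.
Variable Qs : {set {set P}}.
Hypotheses (hQ : forall A, A \in Qs <-> scc opens Vf M A)
           (hpart : partition Qs [set: P]).

Lemma pblock_component p : pblock Qs p \in Qs.
Proof. by case/and3P: hpart => /eqP covQs _ _; rewrite pblock_mem // covQs inE. Qed.

Lemma mem_pblock_component p : p \in pblock Qs p.
Proof. by case/and3P: hpart => /eqP covQs _ _; rewrite mem_pblock covQs inE. Qed.

Lemma component_neq0 A : A \in Qs -> exists a, a \in A.
Proof.
by case/and3P: hpart => _ _ Qs0 AQs; apply/set0Pn; apply: contraNneq Qs0 => <-.
Qed.

Lemma component_eq A B a b : A \in Qs -> B \in Qs -> a \in A -> b \in B ->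
  edge_reach a b -> edge_reach b a -> A = B.
Proof.
move=> AQs BQs aA bB ab ba; have bA := scc_closed ((hQ A).1 AQs) aA ab ba.
case/and3P: hpart => _ trivQs _.
by rewrite -(def_pblock trivQs AQs bA) (def_pblock trivQs BQs bB).
Qed.

Lemma M_of_disjoint A B : A \in Qs -> B \in Qs -> A <> B ->
  M_of opens Vf M A :&: M_of opens Vf M B = set0.
Proof.
move=> AQs BQs AB; apply/setP => x; rewrite inE in_set0; apply/andP => -[xA xB].
have [p pA [q qB pq]] := M_of_connect xA xB (connect0 _ x).
have [q' q'B [p' p'A qp]] := M_of_connect xB xA (connect0 _ x).
have [Ascc Bscc] := ((hQ A).1 AQs, (hQ B).1 BQs).
apply: AB; apply: (component_eq AQs BQs pA qB pq).
apply: rt_trans (scc_edge_reach Bscc qB q'B) _.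
exact: rt_trans qp (scc_edge_reach Ascc p'A pA).
Qed.

Definition component_le (Q1 Q2 : {A | A \in Qs}) : Prop :=
  forall a b, a \in val Q2 -> b \in val Q1 -> edge_reach a b.

Lemma component_le_refl : reflexive _ component_le.
Proof. by case=> A AQs a b /= aA bA; apply: scc_edge_reach aA bA; apply/hQ. Qed.

Lemma component_le_trans : transitive _ component_le.
Proof.
move=> Q1 [B BQs] Q3 le12 le23 a b aQ3 bQ1; have [c cB] := component_neq0 BQs.
exact: rt_trans (le23 a c aQ3 cB) (le12 c b cB bQ1).
Qed.

Lemma component_le_anti : antisymmetric _ component_le.
Proof.
move=> [A AQs] [B BQs] leAB leBA; apply: val_inj => /=.
have [[a aA] [b bB]] := (component_neq0 AQs, component_neq0 BQs).
exact: component_eq AQs BQs aA bB (leBA a b aA bB) (leAB b a bB aA).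
Qed.

Lemma component_le_admissible :
  admissible opens Vf (fun Q : {A | A \in Qs} => M_of opens Vf M (val Q)) component_le.
Proof.
move=> [A AQs] [B BQs] g [gfull ga go] a b /= aA bB.
case/set0Pn: ga => y /setIP[ya yA]; case/set0Pn: go => z /setIP[zo zB].
have yz := connect_trans (alpha_connect 0 gfull ya) (omega_connect 0 gfull zo).
have [p pA [q qB pq]] := M_of_connect yA zB yz.
apply: rt_trans (scc_edge_reach _ aA pA) _; first exact/hQ.
by apply: rt_trans pq (scc_edge_reach _ qB bB); apply/hQ.
Qed.

End Components.
End Predecomposition.
End Flow.

Theorem corollary4p14 (T : finType) (opens : {set {set T}})
  (Vf : {set {set T}}) (P : finType) (M : P -> {set T})
  (Qs : {set {set P}}) :
  is_topology opens -> T0_space opens ->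
  multivector_field opens Vf ->
  is_invariant opens Vf [set: T] ->
  morse_predecomposition opens Vf M ->
  (forall A : {set P}, A \in Qs <-> scc opens Vf M A) ->
  partition Qs [set: P] ->
  morse_decomposition opens Vf
    (fun Q : {A : {set P} | A \in Qs} => M_of opens Vf M (val Q)).
Proof.
move=> htop _ hVf _ hpre hQ hpart.
pose Qblock p : {A | A \in Qs} := exist (fun A => A \in Qs) _ (pblock_component hpart p).
split; [split | |].
- move=> [A AQs] [B BQs] /= AB; apply: (M_of_disjoint htop hVf hpre hQ hpart) => // eAB.
  by apply: AB; apply: val_inj.
- by move=> Q; apply: M_of_isolated_invariant.
- move=> g gess; have [_ _ /(_ g gess)[p [q pq]]] := hpre.
  exists (Qblock p), (Qblock q).
  exact: link_M_of (mem_pblock_component hpart p) (mem_pblock_component hpart q) pq.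
- by move=> Q; apply: M_of_saturated.
- exists (component_le opens Vf M (Qs := Qs)); split.
  + exact: component_le_refl.
  + exact: component_le_trans.
  + exact: component_le_anti.
  + exact: component_le_admissible.
Qed.
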